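(* Let $\mathcal P=(Q,T)$ be a replicated system and $U\subseteq T$. Then $[\![\mathrm{disa}(U)]\!]=[\![\mathrm{dead}(U)]\!]$ if and only if $$\bigwedge_{t\in T}\ \bigwedge_{u\in U}\ \bigvee_{u'\in U}\ \mathrm{pre}(t)+(\mathrm{pre}(u)\mathbin{\dot-}\mathrm{post}(t))\ \ge\ \mathrm{pre}(u'),$$ where $(\vec x\mathbin{\dot-}\vec y)(q)=\max(\vec x(q)-\vec y(q),0)$ for $\vec x,\vec y\in\mathbb N^Q$.
   Context: A replicated system of arity $n$ is $\mathcal P=(Q,T)$ with $Q$ finite and $T\subseteq\bigcup_{k=0}^n Q^{(k)}\times Q^{(k)}$ ($Q^{(k)}$: multisets over $Q$ of size $k$) containing all silent transitions $(\vec x,\vec x)$. For $t=(\vec x,\vec y)$: $\mathrm{pre}(t)=\vec x$, $\mathrm{post}(t)=\vec y$, $\Delta(t)=\vec y-\vec x$. Configurations are $C\in\mathbb N^Q$; $t$ is enabled at $C$ if $C\ge\mathrm{pre}(t)$ (componentwise) and then $C\xrightarrow{t}C+\Delta(t)$. A transition is dead at $C$ if it is disabled at every configuration reachable from $C$ (including $C$). $[\![\mathrm{disa}(U)]\!]$ is the set of configurations at which all transitions of $U$ are disabled; $[\![\mathrm{dead}(U)]\!]$ is the set of configurations at which all transitions of $U$ are dead. *)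

From mathcomp Require Import all_boot.
From Stdlib Require Import Relations.
Set Implicit Arguments. Unset Strict Implicit. Unset Printing Implicit Defensive.

(* Multisets over Q (also configurations N^Q). *)
Definition mset (Q : finType) := {ffun Q -> nat}.
Definition msize (Q : finType) (x : mset Q) : nat := \sum_(q : Q) x q.

Definition trans (Q : finType) := (mset Q * mset Q)%type.
Definition pre (Q : finType) (t : trans Q) : mset Q := t.1.
Definition post (Q : finType) (t : trans Q) : mset Q := t.2.

(* (Q,T) is a replicated system of arity n: every transition is in
   Q^(k) x Q^(k) for some k <= n, and all silent transitions (x,x) with
   |x| <= n belong to T.  T is finite (given as a list). *)
Definition replicated (Q : finType) (n : nat) (T : seq (trans Q)) : Prop :=
  (forall t, t \in T -> msize (pre t) = msize (post t) /\ msize (pre t) <= n)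
  /\ (forall x : mset Q, msize x <= n -> (x, x) \in T).

Definition enabled (Q : finType) (C : mset Q) (t : trans Q) : Prop :=
  forall q, pre t q <= C q.

(* C --t--> C + Delta(t) (well defined in N^Q since C >= pre t). *)
Definition fire (Q : finType) (C : mset Q) (t : trans Q) : mset Q :=
  [ffun q => C q - pre t q + post t q].

Definition step (Q : finType) (T : seq (trans Q)) (C C' : mset Q) : Prop :=
  exists t, t \in T /\ enabled C t /\ C' = fire C t.

Definition reach (Q : finType) (T : seq (trans Q)) : relation (mset Q) :=
  clos_refl_trans (mset Q) (step T).

Definition disa (Q : finType) (U : seq (trans Q)) (C : mset Q) : Prop :=
  forall u, u \in U -> ~ enabled C u.

Definition dead (Q : finType) (T U : seq (trans Q)) (C : mset Q) : Prop :=
  forall u, u \in U -> forall C', reach T C C' -> ~ enabled C' u.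

From Stdlib Require Import Relations.
From mathcomp Require Import all_boot.
From mathcomp Require Import zify.

Set Implicit Arguments.
Unset Strict Implicit.
Unset Printing Implicit Defensive.

(* The key arithmetic fact is [enabled_after_fire]: if t is enabled at C, then
   u is enabled at the successor C + Delta(t) iff C >= pre(t) + (pre(u) -. post(t)),
   so the minimal configuration from which t can fire and then enable u is
   [fire_witness t u] = pre(t) + (pre(u) -. post(t)).
   - If the covering condition holds, [disa U] is closed under steps
     ([disa_step]) hence under reachability ([disa_reach]), so disabled
     configurations are dead.
   - Conversely, if disa = dead, the configuration [fire_witness t u] cannot be
     disabled (firing t from it enables u), which yields the required u'. *)

Section DisaDead.

Variable Q : finType.
Implicit Types (C : mset Q) (t u : trans Q) (T U : seq (trans Q)).

(* The least configuration from which t can fire and afterwards enable u. *)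
Definition fire_witness t u : mset Q :=
  [ffun q => pre t q + (pre u q - post t q)].

Definition covered U t u : Prop :=
  exists2 u', u' \in U & forall q, pre u' q <= fire_witness t u q.

Lemma enabled_after_fire {C t} u : enabled C t ->
  enabled (fire C t) u <-> forall q, fire_witness t u q <= C q.
Proof.
move=> en_t; split=> H q; have := en_t q; rewrite /fire_witness !ffunE.
- by have := H q; rewrite ffunE; lia.
- by have := H q; rewrite ffunE; lia.
Qed.

Lemma fire_witness_enabled t u : enabled (fire_witness t u) t.
Proof. by move=> q; rewrite ffunE leq_addr. Qed.

Lemma fire_witness_fire_enabled t u : enabled (fire (fire_witness t u) t) u.
Proof. by apply/(enabled_after_fire u (fire_witness_enabled t u)). Qed.

Lemma disa_step {T U} :
  (forall t, t \in T -> forall u, u \in U -> covered U t u) ->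
  forall C C', step T C C' -> disa U C -> disa U C'.
Proof.
move=> cov C _ [t [tT [en_t ->]]] dC u uU /(enabled_after_fire u en_t) le_wC.
have [u' u'U le_u'w] := cov t tT u uU.
by apply: (dC u' u'U) => q; apply: leq_trans (le_u'w q) (le_wC q).
Qed.

Lemma disa_reach {T U} :
  (forall t, t \in T -> forall u, u \in U -> covered U t u) ->
  forall C C', reach T C C' -> disa U C -> disa U C'.
Proof.
move=> cov C C'; elim=> [x y /(disa_step cov)|x|x y z _ IH1 _ IH2] //.
by move=> /IH1 /IH2.
Qed.

Lemma dead_disa T U C : dead T U C -> disa U C.
Proof. by move=> D u uU; apply: D uU C (rt_refl _ _ _). Qed.

Lemma disa_fire_witness U t u : ~ covered U t u -> disa U (fire_witness t u).
Proof. by move=> ncov u' u'U en_u'; apply: ncov; exists u'. Qed.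

End DisaDead.

Theorem proposition11 (Q : finType) (n : nat) (T U : seq (trans Q))
  (hT : replicated n T) (hU : {subset U <= T}) :
  (forall C : mset Q, disa U C <-> dead T U C) <->
  (forall t, t \in T -> forall u, u \in U ->
     exists2 u', u' \in U &
       forall q : Q, pre u' q <= pre t q + (pre u q - post t q)).
Proof.
split.
- move=> disa_dead t tT u uU.
  (* Covering is decidable, since U is a finite list. *)
  have [/hasP [u' u'U /forallP le_u'w] | /hasP ncov] :=
    boolP (has (fun u' => [forall q, pre u' q <= fire_witness t u q]) U).
    by exists u' => // q; have := le_u'w q; rewrite ffunE.
  exfalso.
  have Dw : dead T U (fire_witness t u).
    apply/disa_dead/disa_fire_witness => -[u' u'U le_u'w].
    by apply: ncov; exists u' => //; apply/forallP.
  have w_step : step T (fire_witness t u) (fire (fire_witness t u) t).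
    by exists t; split=> //; split=> //; exact: fire_witness_enabled.
  exact: (Dw u uU _ (rt_step _ _ _ _ w_step) (fire_witness_fire_enabled t u)).
- move=> cov C; split; last exact: dead_disa.
  have cov' : forall t, t \in T -> forall u, u \in U -> covered U t u.
    by move=> t tT u uU; have [u' u'U H] := cov t tT u uU;
      exists u' => // q; rewrite ffunE.
  by move=> dC u uU C' R; apply: (disa_reach cov' R dC).
Qed.
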